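(* Let $N\ge2$ and let $a_i=(\alpha_i,N)$, $i=1,\dots,m$, be transpositions in $S_N$ with $1\le\alpha_i\le N-1$, such that the partition $\pi$ of $\{1,\dots,m\}$ defined by $j\sim k\iff a_j=a_k$ belongs to $NC_{1,2}(m)$. Let $i_1<\dots<i_k$ be the elements of those one-element blocks of $\pi$ that are not inner blocks of any two-element block. Then the cycle decomposition of $\sigma=a_1\cdots a_m$ is as follows: (i) if $k\ge1$, $\sigma$ has the cycle $(N,\alpha_{i_k},\alpha_{i_{k-1}},\dots,\alpha_{i_1})$; if $k=0$, $N$ is a fixed point of $\sigma$; (ii) for every two-element block $\{p,r\}$ of $\pi$ having at least one direct inner one-element block, with the direct inner one-element blocks being $\{j_1\},\dots,\{j_l\}$, $j_1<\dots<j_l$, $\sigma$ has the cycle $(\alpha_r,\alpha_{j_l},\dots,\alpha_{j_1})$ (here $\alpha_r=\alpha_p$); (iii) these are all the nontrivial cycles of $\sigma$; all other points are fixed.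
   Context: Products of permutations are compositions, rightmost factor acting first; a cycle $(x_1,x_2,\dots,x_t)$ maps $x_1\mapsto x_2\mapsto\dots\mapsto x_t\mapsto x_1$. $NC_{1,2}(m)$ is the set of non-crossing partitions of $\{1,\dots,m\}$ all of whose blocks have one or two elements (non-crossing: no $k_1<l_1<k_2<l_2$ with $k_1,k_2$ in one block and $l_1,l_2$ in another). A block $B$ is an inner block of a block $B'$ if $B'$ contains an element smaller than all elements of $B$ and an element larger than all elements of $B$. $B$ is a direct inner block of $B''$ if $B$ is an inner block of $B''$ and there is no block $B'$ such that $B$ is an inner block of $B'$ and $B'$ is an inner block of $B''$. *)

(* Points of S_N are the naturals 1..N; permutations are
   represented as functions nat -> nat (fixing everything outside 1..N). *)
From mathcomp Require Import all_boot.
Set Implicit Arguments. Unset Strict Implicit. Unset Printing Implicit Defensive.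

Definition transp (a b x : nat) : nat :=
  if x == a then b else if x == b then a else x.

(* sigma = a_1 a_2 ... a_m with a_i = (alpha i, N); rightmost factor acts first:
   sigma x = a_1 (a_2 (... (a_m x))) *)
Definition sigma (N m : nat) (alpha : nat -> nat) (x : nat) : nat :=
  foldr (fun i y => transp (alpha i) N y) x (iota 1 m).

Definition block_of (m : nat) (alpha : nat -> nat) (j : nat) : seq nat :=
  [seq k <- iota 1 m | alpha k == alpha j].

Definition blocks (m : nat) (alpha : nat -> nat) : seq (seq nat) :=
  undup [seq block_of m alpha j | j <- iota 1 m].

Definition NC12 (bl : seq (seq nat)) : Prop :=
  (forall B, B \in bl -> size B = 1 \/ size B = 2) /\
  (forall B B', B \in bl -> B' \in bl -> B <> B' ->
     ~ exists k1 l1 k2 l2, [/\ k1 < l1, l1 < k2, k2 < l2,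
                             (k1 \in B) && (k2 \in B) & (l1 \in B') && (l2 \in B')]).

Definition inner (B B' : seq nat) : bool :=
  has (fun x => all (fun y => x < y) B) B' && has (fun x => all (fun y => y < x) B) B'.

Definition direct_inner (bl : seq (seq nat)) (B B'' : seq nat) : bool :=
  inner B B'' && ~~ has (fun B' => inner B B' && inner B' B'') bl.

Definition outer_singletons (m : nat) (alpha : nat -> nat) : seq nat :=
  [seq j <- iota 1 m | ([:: j] \in blocks m alpha) &&
     ~~ has (fun B => (size B == 2) && inner [:: j] B) (blocks m alpha)].

Definition direct_inner_singletons (m : nat) (alpha : nat -> nat) (B : seq nat)
  : seq nat :=
  [seq j <- iota 1 m | ([:: j] \in blocks m alpha) &&
     direct_inner (blocks m alpha) [:: j] B].

Definition has_cycle (f : nat -> nat) (c : seq nat) : bool :=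
  (c != [::]) && uniq c && fcycle f c.

From mathcomp Require Import all_boot zify.
Set Implicit Arguments. Unset Strict Implicit. Unset Printing Implicit Defensive.

(* The proof is by induction on m, peeling off the rightmost factor:
   sigma_{m+1} = sigma_m o (alpha_{m+1}, N).  Composing a permutation g with
   a transposition (y, x) acts on cycles by elementary surgery: if x and y lie
   on one cycle (x X y Y) of g, it splits into (x Y) and (y X); if y is fixed
   by g, it is inserted after x.  On the combinatorial side, appending the
   index m+1 either adds a new value, which becomes the last outer singleton
   (merge), or closes a pair {p, m+1}; then the outer singletons of m split as
   [outer singletons of m+1] ++ p :: [direct inner singletons of {p, m+1}]
   (split).  Old pairs keep their direct inner singletons.  The invariant
   [cycles_hold] carried by the induction states that the cycles of parts (i)
   and (ii) are cycles of sigma (a pair without direct inner singletons gives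
   a fixed point).  Part (iii) follows since every point moved by sigma is N
   or a value of alpha, and each value lies on one of these cycles. *)

Lemma sigmaS N m alpha x :
  sigma N m.+1 alpha x = sigma N m alpha (transp (alpha m.+1) N x).
Proof. by rewrite /sigma -[m.+1]addn1 iotaD addnC foldr_cat. Qed.

Lemma transp_id a b z : z != a -> z != b -> transp a b z = z.
Proof. by rewrite /transp => /negbTE-> /negbTE->. Qed.

Lemma sigma_fix N m alpha x :
  x != N -> (forall i, 0 < i <= m -> alpha i != x) -> sigma N m alpha x = x.
Proof.
move=> xN; elim: m => [|m IH] hx //.
rewrite sigmaS transp_id ?IH // => [i hi|]; first by apply: hx; lia.
by rewrite eq_sym; apply: hx; lia.
Qed.

Section CycleSurgery.
Variables f g : nat -> nat.

Lemma fpath_rcons_eq x y s z : f x = g y -> {in s, f =1 g} ->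
  fpath f x (rcons s z) = fpath g y (rcons s z).
Proof.
elim: s x y => [|w s IH] x y fxy fg /=; rewrite fxy //; congr (_ && _).
by apply: IH => [|v sv]; apply: fg; rewrite inE ?eqxx ?sv ?orbT.
Qed.

Lemma fcycle_eq_in c : {in c, f =1 g} -> fcycle g c -> fcycle f c.
Proof.
move=> fg; rewrite (@eq_in_cycle _ (mem c) (frel f) (frel g)) //.
by move=> u v /fg /= ->.
Qed.

Variables x y : nat.
Hypothesis f_def : forall z, f z = g (transp y x z).

Lemma agree_off (s : seq nat) : x \notin s -> y \notin s -> {in s, f =1 g}.
Proof.
move=> xs ys z zs; rewrite f_def transp_id //.
- by apply: contraNneq ys => <-.
- by apply: contraNneq xs => <-.
Qed.

Lemma fcycle_split X Y : uniq (x :: X ++ y :: Y) -> fcycle g (x :: X ++ y :: Y) ->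
  fcycle f (x :: Y) /\ fcycle f (y :: X).
Proof.
rewrite cons_uniq => /andP[]; rewrite mem_cat inE !negb_or => /and3P[xX xy xY].
rewrite cat_uniq /= => /and3P[_ /norP[yX _] /andP[yY _]].
rewrite /= rcons_cat -cat_rcons cat_path last_rcons => /andP[pX pY].
have fx : f x = g y by rewrite f_def /transp (negbTE xy) eqxx.
have fy : f y = g x by rewrite f_def /transp eqxx.
split; [rewrite (fpath_rcons_eq _ fx) | rewrite (fpath_rcons_eq _ fy)] => //;
  exact: agree_off.
Qed.

Lemma fcycle_merge Y : uniq (x :: y :: Y) -> g y = y -> fcycle g (x :: Y) ->
  fcycle f (x :: y :: Y).
Proof.
rewrite /= !inE negb_or -!andbA => /and4P[xy xY yY _] gy cY.
have fx : f x = y by rewrite f_def /transp (negbTE xy) eqxx.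
have fy : f y = g x by rewrite f_def /transp eqxx.
by rewrite /= fx eqxx (fpath_rcons_eq _ fy) //; apply: agree_off.
Qed.
End CycleSurgery.

Lemma fcycle_moved (f h : nat -> nat) y (L : seq nat) x :
  fcycle f (y :: rev (map h L)) -> x \in y :: rev (map h L) -> f x != x -> L != [::].
Proof. by case: L => //=; rewrite inE andbT => /eqP fy /eqP ->; rewrite fy eqxx. Qed.

Section Partition.
Variable alpha : nat -> nat.

Definition single (M j : nat) : bool :=
  (0 < j <= M) && all (fun k => (alpha k == alpha j) ==> (k == j)) (iota 1 M).

Definition covered (M lo hi j : nat) : bool :=
  has (fun q => has (fun s => [&& lo < q < j, j < s < hi & alpha q == alpha s])
    (iota 1 M)) (iota 1 M).

Definition at_most_two (M : nat) : Prop := forall i j k,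
  0 < i -> i < j -> j < k -> k <= M -> alpha i = alpha j -> alpha j = alpha k -> False.

Definition noncrossing (M : nat) : Prop := forall k1 l1 k2 l2,
  0 < k1 -> k1 < l1 -> l1 < k2 -> k2 < l2 -> l2 <= M ->
  alpha k1 = alpha k2 -> alpha l1 = alpha l2 -> False.

Lemma mem_iota1 M k : (k \in iota 1 M) = (0 < k <= M).
Proof. by rewrite mem_iota; lia. Qed.

Lemma singleP M j : reflect
  (0 < j <= M /\ forall k, 0 < k <= M -> alpha k = alpha j -> k = j) (single M j).
Proof.
apply: (iffP andP) => [[jM /allP h]|[jM h]]; split => //.
- move=> k kM akj; apply/eqP.
  by move: (h k); rewrite mem_iota1 akj eqxx implyTb; apply.
- apply/allP => k; rewrite mem_iota1 => kM.
  by apply/implyP => /eqP akj; rewrite (h k kM akj).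
Qed.

Lemma coveredP M lo hi j : reflect
  (exists q s, [/\ lo < q < j, j < s < hi, s <= M & alpha q = alpha s])
  (covered M lo hi j).
Proof.
apply: (iffP hasP) => [[q _ /hasP[s]]|[q [s [qj js sM aqs]]]].
- by rewrite mem_iota1 => sM /and3P[qj js /eqP aqs]; exists q, s; split => //; lia.
- exists q; first by rewrite mem_iota1; lia.
  by apply/hasP; exists s; rewrite ?mem_iota1 ?aqs ?eqxx ?qj ?js //; lia.
Qed.

Lemma at_most_two_le M M' : M' <= M -> at_most_two M -> at_most_two M'.
Proof. by move=> MM' h i j k *; apply: (h i j k) => //; lia. Qed.

Lemma noncrossing_le M M' : M' <= M -> noncrossing M -> noncrossing M'.
Proof. by move=> MM' h k1 l1 k2 l2 *; apply: (h k1 l1 k2 l2) => //; lia. Qed.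

Lemma pair_partner M q s k : at_most_two M -> 0 < q -> q < s -> s <= M ->
  alpha q = alpha s -> 0 < k <= M -> alpha k = alpha q -> k = q \/ k = s.
Proof.
move=> le2 q0 qs sM aqs kM akq.
case: (ltngtP k q) => [kq|qk|->]; [exfalso | | by left].
  by apply: (le2 k q s) => //; lia.
case: (ltngtP k s) => [ks|sk|->]; [exfalso | exfalso | by right].
  by apply: (le2 q k s) => //; congruence.
by apply: (le2 q s k) => //; [lia | congruence].
Qed.

Lemma mem_block M j k : (k \in block_of M alpha j) = (0 < k <= M) && (alpha k == alpha j).
Proof. by rewrite /block_of mem_filter mem_iota1 andbC. Qed.

Lemma block_sorted M j : sorted ltn (block_of M alpha j).
Proof. exact/sorted_filter/iota_ltn_sorted/ltn_trans. Qed.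

Lemma in_blocks M B :
  B \in blocks M alpha <-> exists2 j, 0 < j <= M & B = block_of M alpha j.
Proof.
rewrite /blocks mem_undup; split.
- by case/mapP => j; rewrite mem_iota1 => hj ->; exists j.
- by case=> j hj ->; apply: map_f; rewrite mem_iota1.
Qed.

Lemma singleton_block M j : ([:: j] \in blocks M alpha) = single M j.
Proof.
apply/idP/singleP => [/in_blocks[i iM Bi]|[jM h]].
- have : j \in block_of M alpha i by rewrite -Bi mem_head.
  rewrite mem_block => /andP[jM /eqP aji]; split => // k kM akj.
  have : k \in block_of M alpha i by rewrite mem_block kM akj aji eqxx.
  by rewrite -Bi inE => /eqP.
- apply/in_blocks; exists j => //.
  apply: (irr_sorted_eq ltn_trans ltnn) => // [|k]; first exact: block_sorted.
  rewrite inE mem_block; apply/eqP/andP => [->|[kM /eqP akj]]; last exact: h.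
  by rewrite eqxx.
Qed.

Lemma pair_block M B : B \in blocks M alpha -> size B = 2 ->
  exists q s, [/\ B = [:: q; s], 0 < q, q < s, s <= M & alpha q = alpha s].
Proof.
case/in_blocks => i iM Bi; case: B Bi => [|q [|s [|? ?]]] //= Bi _.
have := block_sorted M i; rewrite -Bi /= andbT => qs.
have : q \in block_of M alpha i by rewrite -Bi mem_head.
have : s \in block_of M alpha i by rewrite -Bi !inE eqxx orbT.
rewrite !mem_block => /andP[sM /eqP asi] /andP[qM /eqP aqi].
by exists q, s; split => //; [lia | lia | congruence].
Qed.

Lemma pair_block_in M q s : at_most_two M -> 0 < q -> q < s -> s <= M ->
  alpha q = alpha s -> [:: q; s] \in blocks M alpha.
Proof.
move=> le2 q0 qs sM aqs; apply/in_blocks; exists q; first lia.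
apply: (irr_sorted_eq ltn_trans ltnn); [by rewrite /= qs | exact: block_sorted |].
move=> k; rewrite mem_block !inE; apply/idP/andP => [/orP[]/eqP->|[kM /eqP akq]].
- by rewrite eqxx; split => //; lia.
- by rewrite aqs eqxx; split => //; lia.
- by case: (pair_partner le2 q0 qs sM aqs kM akq) => ->; rewrite eqxx ?orbT.
Qed.

Lemma inner_pair j p r : p < r -> inner [:: j] [:: p; r] = (p < j < r).
Proof. by move=> pr; rewrite /inner /=; apply/idP/idP; lia. Qed.

Lemma outer_singletonsE M : at_most_two M ->
  outer_singletons M alpha =
  [seq j <- iota 1 M | single M j && ~~ covered M 0 M.+1 j].
Proof.
move=> le2; apply: eq_in_filter => j _; rewrite singleton_block; congr (_ && ~~ _).
apply/hasP/coveredP => [[B BM /andP[/eqP B2 jB]]|[q [s [qj js sM aqs]]]].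
- have [q [s [Bqs q0 qs sM aqs]]] := pair_block BM B2.
  rewrite Bqs inner_pair // in jB; exists q, s; split => //; lia.
- exists [:: q; s]; first by apply: pair_block_in => //; lia.
  by rewrite /= inner_pair; lia.
Qed.

Lemma direct_inner_singletonsE M p r : at_most_two M -> 0 < p -> p < r -> r <= M ->
  alpha p = alpha r ->
  direct_inner_singletons M alpha [:: p; r] =
  [seq j <- iota 1 M | [&& single M j, p < j < r & ~~ covered M p r j]].
Proof.
move=> le2 p0 pr rM apr; apply: eq_in_filter => j _.
rewrite singleton_block /direct_inner inner_pair //; congr [&& _, _ & ~~ _].
apply/hasP/coveredP => [[B BM /andP[jB Bpr]]|[q [s [qj js sM aqs]]]].
- case/in_blocks: BM => i iM Bi; subst B.
  case/andP: jB => /hasP[x xB /= xj] /hasP[y yB /= yj].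
  case/andP: Bpr => /hasP[z zpr /allP zB] /hasP[w wpr /allP wB].
  have := zB x xB; have := wB y yB.
  move: xB yB zpr wpr; rewrite !mem_block !inE.
  move=> /andP[xM /eqP axi] /andP[yM /eqP ayi] zpr wpr zx yw.
  exists x, y; split; [ | | lia | congruence].
  + by case/orP: zpr => /eqP zpr; lia.
  + by case/orP: wpr => /eqP wpr; lia.
- exists [:: q; s]; first by apply: pair_block_in => //; lia.
  rewrite inner_pair; last lia.
  by rewrite /inner /=; apply/and3P; split; lia.
Qed.
End Partition.

Section NonCrossing.
Variable alpha : nat -> nat.

Lemma nc12_at_most_two M : NC12 (blocks M alpha) -> at_most_two alpha M.
Proof.
move=> [sizes _] i j k i0 ij jk kM aij ajk.
have iM : 0 < i <= M by lia.
have Bi : block_of M alpha i \in blocks M alpha by apply/in_blocks; exists i.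
have : size [:: i; j; k] <= size (block_of M alpha i).
  apply: uniq_leq_size => [|x]; first by rewrite /= !inE; apply/and3P; split => //; lia.
  by rewrite !inE mem_block => /or3P[]/eqP->; rewrite ?aij -?ajk eqxx andbT //; lia.
by case: (sizes _ Bi) => ->.
Qed.

Lemma nc12_noncrossing M : NC12 (blocks M alpha) -> noncrossing alpha M.
Proof.
move=> nc k1 l1 k2 l2 k0 kl1 lk2 kl2 lM ak al.
have [ak1l1|] := eqVneq (alpha k1) (alpha l1).
  by have le2 := nc12_at_most_two nc; apply: (le2 k1 l1 k2) => //; [lia | congruence].
move=> nkl; case: nc => _ /(_ (block_of M alpha k1) (block_of M alpha l1)); apply.
- by apply/in_blocks; exists k1 => //; lia.
- by apply/in_blocks; exists l1 => //; lia.
- move=> same; have : k1 \in block_of M alpha l1 by rewrite -same mem_block eqxx andbT; lia.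
  by rewrite mem_block (negbTE nkl) andbF.
- exists k1, l1, k2, l2; split => //; rewrite !mem_block ?ak ?al !eqxx !andbT; lia.
Qed.
End NonCrossing.

Lemma sorted_split (s : seq nat) p : sorted ltn s -> p \in s ->
  s = [seq j <- s | j < p] ++ p :: [seq j <- s | p < j].
Proof.
elim: s => // x s IH; rewrite /= path_sortedE; last exact: ltn_trans.
move=> /andP[/allP xs ss]; rewrite inE => /orP[/eqP->|ps].
- rewrite ltnn /= (eq_in_filter (a2 := pred0)) ?filter_pred0; last first.
    by move=> j /xs /= pj; rewrite ltnNge ltnW.
  by rewrite (eq_in_filter (a2 := predT)) ?filter_predT // => j /xs.
- have xp : x < p := xs p ps.
  by rewrite xp ltnNge ltnW //= {1}(IH ss ps).
Qed.

Section OneMoreFactor.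
Variables (alpha : nat -> nat) (m : nat).
Local Notation a := (alpha m.+1).

Lemma single_step j : 0 < j <= m -> single alpha m.+1 j = single alpha m j && (alpha j != a).
Proof.
move=> jm; apply/singleP/andP => [[_ h]|[/singleP[_ h] /eqP ja]].
- split; first by apply/singleP; split => // k km; apply: h; lia.
  by apply/eqP => aj; have := h m.+1 (leqnn _) (esym aj); lia.
- split => [|k km akj]; first lia.
  case: (ltngtP k m.+1) => [kn|kn|ekn]; [apply: h => //; lia | lia |].
  by subst k; case: ja.
Qed.

Lemma covered_top M lo hi j : M < hi -> covered alpha M lo hi j = covered alpha M lo M.+1 j.
Proof.
move=> Mhi; apply/coveredP/coveredP => -[q [s [qj js sM aqs]]];
  by exists q, s; split => //; lia.
Qed.

Lemma covered_step lo hi j :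
  (forall q, lo < q < j -> j < m.+1 < hi -> alpha q != a) ->
  covered alpha m.+1 lo hi j = covered alpha m lo hi j.
Proof.
move=> h; apply/coveredP/coveredP => -[q [s [qj js sM aqs]]];
  exists q, s; split => //; last lia.
case: (ltngtP s m.+1) => [|sn|sn]; [lia | lia | subst s].
by case/negP: (h q qj js); apply/eqP.
Qed.

Lemma iota1S : iota 1 m.+1 = rcons (iota 1 m) m.+1.
Proof. by rewrite -cats1 -[m.+1]addn1 iotaD addnC. Qed.

Lemma outer_step_single : at_most_two alpha m.+1 ->
  (forall k, 0 < k <= m -> alpha k != a) ->
  outer_singletons m.+1 alpha = rcons (outer_singletons m alpha) m.+1.
Proof.
move=> le2 new.
rewrite !outer_singletonsE //; last exact: at_most_two_le le2.
rewrite iota1S filter_rcons.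
have -> : single alpha m.+1 m.+1.
  apply/singleP; split=> [|k km akn]; first lia.
  case: (ltngtP k m.+1) => [kn|kn|//]; last lia.
  by case/negP: (new k ltac:(lia)); apply/eqP.
have -> : covered alpha m.+1 0 m.+2 m.+1 = false.
  by apply/negbTE/coveredP => -[q [s [? ? ? ?]]]; lia.
congr rcons; apply: eq_in_filter => j; rewrite mem_iota1 => jm.
rewrite single_step // new // andbT covered_step ?covered_top //.
by move=> q *; apply: new; lia.
Qed.

Lemma direct_inner_step q s : at_most_two alpha m.+1 -> noncrossing alpha m.+1 ->
  0 < q -> q < s -> s <= m -> alpha q = alpha s ->
  direct_inner_singletons m.+1 alpha [:: q; s] = direct_inner_singletons m alpha [:: q; s].
Proof.
move=> le2 nc q0 qs sm aqs.
rewrite !direct_inner_singletonsE //; try lia; last exact: at_most_two_le le2.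
rewrite iota1S filter_rcons.
have -> : (m.+1 < s) = false by lia.
rewrite !andbF.
apply: eq_in_filter => j; rewrite mem_iota1 => jm.
rewrite single_step // covered_step => [|k *]; last lia.
case: (single alpha m j) => //=; have [qjs|] := boolP (q < j < s); last by rewrite !andbF.
suff -> : alpha j != a by [].
by apply/eqP => aj; apply: (nc q j s m.+1) => //; lia.
Qed.

Lemma outer_step_pair p : at_most_two alpha m.+1 -> noncrossing alpha m.+1 ->
  0 < p <= m -> alpha p = a ->
  outer_singletons m alpha =
  outer_singletons m.+1 alpha ++ p :: direct_inner_singletons m.+1 alpha [:: p; m.+1].
Proof.
move=> le2 nc pm ap; have le2m := at_most_two_le (leqnSn m) le2.
have p0 : 0 < p by case/andP: pm.
have partner k : 0 < k <= m.+1 -> alpha k = alpha p -> k = p \/ k = m.+1.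
  by apply: pair_partner le2 p0 _ (leqnn _) ap; lia.
have single_other j : 0 < j <= m -> j != p -> single alpha m.+1 j = single alpha m j.
  move=> jm jp; rewrite single_step //; case sj: (single alpha m j) => //=.
  apply/eqP => aj; case/singleP: sj => _ /(_ p pm); rewrite ap aj => /(_ erefl) pj.
  by rewrite pj eqxx in jp.
have not_single_p : single alpha m.+1 p = false.
  by apply/negbTE/singleP => -[_ /(_ m.+1)]; rewrite ap => /(_ _ erefl); lia.
have not_single_last : single alpha m.+1 m.+1 = false.
  by apply/negbTE/singleP => -[_ /(_ p)]; rewrite ap => /(_ _ erefl); lia.
have cover_inside j : p < j -> covered alpha m 0 m.+1 j = covered alpha m p m.+1 j.
  move=> pj; apply/coveredP/coveredP => -[q [s [qj js sm aqs]]];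
    exists q, s; split => //; last lia.
  case: (ltngtP p q) => [|qp|pq]; [lia | exfalso | exfalso].
  - by apply: (nc q p s m.+1) => //; lia.
  - by subst q; apply: (le2 p s m.+1) => //; [lia | congruence].
have outer_p : p \in outer_singletons m alpha.
  rewrite outer_singletonsE // mem_filter mem_iota1 pm andbT; apply/andP; split.
    apply/singleP; split => // k km akp; have [|//|] := partner k _ akp; lia.
  by apply/coveredP => -[q [s [qp ps sm aqs]]]; apply: (nc q p s m.+1) => //; lia.
rewrite {1}(sorted_split _ outer_p); last first.
  by rewrite outer_singletonsE //; exact/sorted_filter/iota_ltn_sorted/ltn_trans.
rewrite direct_inner_singletonsE //; last lia.
rewrite !outer_singletonsE // -!filter_predI !iota1S !filter_rcons not_single_last ltnn !andbF.
congr (_ ++ _ :: _); apply: eq_in_filter => j; rewrite mem_iota1 => jm /=.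
- case: (ltngtP j p) => [jp|pj|->]; last by rewrite not_single_p.
  + rewrite single_other ?(ltn_eqF jp) // covered_step ?covered_top //.
    move=> q /andP[q0 qj] _; apply/eqP => aq.
    have qm : 0 < q <= m.+1 by lia.
    by case: (partner q qm (etrans aq (esym ap))); lia.
  + suff -> : covered alpha m.+1 0 m.+2 j by rewrite andbF.
    by apply/coveredP; exists p, m.+1; split => //; lia.
- case: (ltnP p j) => pj /=; last by rewrite !andbF.
  rewrite single_other ?(gtn_eqF pj) // covered_step; last lia.
  by rewrite -cover_inside // (_ : j < m.+1); last lia.
Qed.
End OneMoreFactor.

Section Covering.
Variable alpha : nat -> nat.

Lemma mem_outer_single M j : j \in outer_singletons M alpha -> single alpha M j.
Proof. by rewrite mem_filter singleton_block => /andP[/andP[]]. Qed.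

Lemma mem_direct_inner M q r j : q < r ->
  j \in direct_inner_singletons M alpha [:: q; r] -> single alpha M j && (q < j < r).
Proof.
move=> qr; rewrite mem_filter singleton_block /direct_inner inner_pair //.
by case/andP => /and3P[-> ->].
Qed.

(* a singleton covered by a pair is a direct inner singleton of the innermost
   pair covering it; induction on the width of the window (lo, hi) *)
Lemma direct_cover M lo hi i : at_most_two alpha M -> single alpha M i ->
  covered alpha M lo hi i -> exists q r,
  [/\ 0 < q, q < r, r <= M, alpha q = alpha r &
       i \in direct_inner_singletons M alpha [:: q; r]].
Proof.
move=> le2 si; have [n] := ubnP (hi - lo); elim: n lo hi => // n IH lo hi win.
case/coveredP => q [s [qi ins sM aqs]].
have [nested|not_nested] := boolP (covered alpha M q s i).
  by apply: (IH q s) => //; lia.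
exists q, s; split => //; try lia.
rewrite direct_inner_singletonsE ?mem_filter ?mem_iota1 ?si ?not_nested ?andbT //;
  by case/singleP: si; lia.
Qed.
End Covering.

Section CycleStructure.
Variables (N : nat) (alpha : nat -> nat).

Definition outer_cycle (m : nat) : seq nat :=
  N :: rev (map alpha (outer_singletons m alpha)).

Definition pair_cycle (m q r : nat) : seq nat :=
  alpha r :: rev (map alpha (direct_inner_singletons m alpha [:: q; r])).

Definition cycles_hold (m : nat) : Prop :=
  fcycle (sigma N m alpha) (outer_cycle m) /\
  forall q r, 0 < q -> q < r -> r <= m -> alpha q = alpha r ->
    fcycle (sigma N m alpha) (pair_cycle m q r).

Lemma value_in_cycles m i : at_most_two alpha m -> 0 < i <= m ->
  alpha i \in outer_cycle m \/ exists q r,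
  [/\ 0 < q, q < r, r <= m, alpha q = alpha r & alpha i \in pair_cycle m q r].
Proof.
move=> le2 im; have [si|nsi] := boolP (single alpha m i).
- have [cov|ncov] := boolP (covered alpha m 0 m.+1 i).
    have [q [r [q0 qr rm aqr ir]]] := direct_cover le2 si cov.
    by right; exists q, r; split => //; rewrite inE mem_rev map_f ?orbT.
  left; rewrite inE mem_rev map_f ?orbT // outer_singletonsE //.
  by rewrite mem_filter si ncov mem_iota1.
- move: nsi; rewrite /single im => /allPn[k]; rewrite mem_iota1 negb_imply.
  move=> km /andP[/eqP aki kni]; right.
  case: (ltngtP k i) => [ki|ik|eki]; last by rewrite eki eqxx in kni.
  + by exists k, i; split; rewrite /pair_cycle ?mem_head //; lia.
  + by exists i, k; split; rewrite /pair_cycle ?aki ?mem_head //; lia.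
Qed.

Lemma moved_in_cycles m x : (forall i, 0 < i <= m -> alpha i != N) ->
  at_most_two alpha m -> sigma N m alpha x != x ->
  x \in outer_cycle m \/ exists q r,
  [/\ 0 < q, q < r, r <= m, alpha q = alpha r & x \in pair_cycle m q r].
Proof.
move=> aN le2 sx; have [->|xN] := eqVneq x N; first by left; exact: mem_head.
have [/hasP[i]|/hasPn fixed] := boolP (has (fun i => alpha i == x) (iota 1 m)).
  by rewrite mem_iota1 => im /eqP <-; exact: value_in_cycles.
by case/eqP: sx; apply: sigma_fix => // i im; apply: fixed; rewrite mem_iota1.
Qed.

Lemma map_singles_uniq M (L : seq nat) : uniq L -> {in L, forall j, single alpha M j} ->
  uniq (map alpha L).
Proof.
move=> uL sL; rewrite map_inj_in_uniq // => i j iL jL aij.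
by case/singleP: (sL j jL) => _; apply => //; case/singleP: (sL i iL).
Qed.

Lemma outer_cycle_uniq m : (forall i, 0 < i <= m -> alpha i != N) -> uniq (outer_cycle m).
Proof.
move=> aN; rewrite /outer_cycle /= mem_rev rev_uniq; apply/andP; split.
- apply/mapP => -[j /mem_outer_single /singleP[jm _] Naj].
  by case/eqP: (aN j jm).
- exact/map_singles_uniq/mem_outer_single/filter_uniq/iota_uniq.
Qed.

Lemma pair_cycle_uniq m q r : 0 < q -> q < r -> r <= m -> alpha q = alpha r ->
  uniq (pair_cycle m q r).
Proof.
move=> q0 qr rm aqr; rewrite /pair_cycle /= mem_rev rev_uniq; apply/andP; split.
- apply/mapP => -[j /(mem_direct_inner qr) /andP[/singleP[jm uj] qjr] arj].
  by have := uj r _ arj; lia.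
- apply: (@map_singles_uniq m) => [|j /(mem_direct_inner qr) /andP[]//].
  exact/filter_uniq/iota_uniq.
Qed.

Lemma mem_pair_cycle m q r x : q < r -> x \in pair_cycle m q r ->
  exists2 j, q < j <= r & x = alpha j.
Proof.
move=> qr; rewrite inE mem_rev => /orP[/eqP->|/mapP[j /(mem_direct_inner qr) /andP[_ qjr] ->]].
- by exists r => //; lia.
- by exists j => //; lia.
Qed.

Section Step.
Variable m : nat.
Local Notation a := (alpha m.+1).
Hypotheses (aN : forall i, 0 < i <= m.+1 -> alpha i != N)
  (le2 : at_most_two alpha m.+1) (nc : noncrossing alpha m.+1)
  (IH : cycles_hold m).

Let aN_old i : 0 < i <= m -> alpha i != N.
Proof. by move=> im; apply: aN; lia. Qed.

(* the cycle of an old pair avoids N and alpha (m+1), so it survives *)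
Lemma old_pair_cycle q r : 0 < q -> q < r -> r <= m -> alpha q = alpha r ->
  fcycle (sigma N m.+1 alpha) (pair_cycle m.+1 q r).
Proof.
move=> q0 qr rm aqr.
rewrite /pair_cycle direct_inner_step // -/(pair_cycle m q r).
apply: (fcycle_eq_in _ (IH.2 q r q0 qr rm aqr)); apply: (agree_off (sigmaS N m alpha)).
- apply/negP => /(mem_pair_cycle qr)[j qjr Nj].
  by have := @aN_old j; rewrite -Nj eqxx => /(_ ltac:(lia)).
- apply/negP => /(mem_pair_cycle qr)[j qjr aj].
  case: (ltngtP j r) => [jr|rj|ejr]; [|lia|].
  + by apply: (nc (k1 := q) (l1 := j) (k2 := r) (l2 := m.+1)) => //; lia.
  + by subst j; apply: (le2 (i := q) (j := r) (k := m.+1)) => //; lia.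
Qed.

(* a new value alpha (m+1) is inserted into the outer cycle right after N *)
Lemma cycles_step_single : (forall k, 0 < k <= m -> alpha k != a) -> cycles_hold m.+1.
Proof.
move=> new; have new_cycle := outer_step_single le2 new.
split=> [|q r q0 qr rm aqr].
- have := outer_cycle_uniq aN; rewrite /outer_cycle new_cycle map_rcons rev_rcons => uo.
  apply: (fcycle_merge (sigmaS N m alpha) uo _ IH.1).
  by apply: sigma_fix => [|i im]; [apply: aN | apply: new]; lia.
- apply: old_pair_cycle => //; case: (ltngtP r m.+1) => [|rn|er]; [lia | lia |].
  by subst r; case/negP: (new q ltac:(lia)); apply/eqP.
Qed.

(* closing a pair {p, m+1} splits the outer cycle in two *)
Lemma cycles_step_pair p : 0 < p <= m -> alpha p = a -> cycles_hold m.+1.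
Proof.
move=> pm ap; have := outer_cycle_uniq aN_old; have := IH.1.
rewrite /outer_cycle (outer_step_pair le2 nc pm ap) map_cat rev_cat /= rev_cons cat_rcons ap.
move=> co uo; have [new_outer new_pair] := fcycle_split (sigmaS N m alpha) uo co.
split=> // q r q0 qr rm aqr.
case: (ltngtP r m.+1) => [rm'|rn|er]; [by apply: old_pair_cycle; lia | lia |].
subst r; have p0 : 0 < p by case/andP: pm.
have pn : p < m.+1 by lia.
have qn : 0 < q <= m.+1 by lia.
by case: (pair_partner le2 p0 pn (leqnn _) ap qn (etrans aqr (esym ap))) => [->|]; last lia.
Qed.
End Step.

Lemma all_cycles_hold m : (forall i, 0 < i <= m -> alpha i != N) ->
  at_most_two alpha m -> noncrossing alpha m -> cycles_hold m.
Proof.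
elim: m => [|m IH] aN le2 nc; first by split=> [|q r]; [rewrite /= eqxx | lia].
have IHm : cycles_hold m.
  apply: IH; first by move=> i im; apply: aN; lia.
  - exact: at_most_two_le le2.
  - exact: noncrossing_le nc.
have [/hasP[p] | /hasPn new] := boolP (has (fun k => alpha k == alpha m.+1) (iota 1 m)).
- by rewrite mem_iota1 => pm /eqP ap; exact: cycles_step_pair pm ap.
- by apply: cycles_step_single => // k km; apply: new; rewrite mem_iota1.
Qed.
End CycleStructure.

Theorem lemma6 (N m : nat) (alpha : nat -> nat)
  (hN : 2 <= N)
  (halpha : forall i, 1 <= i <= m -> 1 <= alpha i <= N - 1)
  (hpi : NC12 (blocks m alpha)) :
  let s := sigma N m alpha in
  let I := outer_singletons m alpha in
  (* (i) *)
  (if I != [::] then has_cycle s (N :: rev (map alpha I)) else s N == N) /\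
  (* (ii) *)
  (forall B, B \in blocks m alpha -> size B = 2 ->
     let J := direct_inner_singletons m alpha B in
     J != [::] -> has_cycle s (alpha (last 0 B) :: rev (map alpha J))) /\
  (* (iii) *)
  (forall x, 1 <= x <= N -> s x != x ->
     (I != [::] /\ x \in N :: rev (map alpha I)) \/
     (exists2 B, B \in blocks m alpha &
        [/\ size B = 2, direct_inner_singletons m alpha B != [::] &
            x \in alpha (last 0 B) :: rev (map alpha (direct_inner_singletons m alpha B))])).
Proof.
move=> s I.
have aN i : 0 < i <= m -> alpha i != N by move/halpha; lia.
have le2 := nc12_at_most_two hpi; have nc := nc12_noncrossing hpi.
have [outer pairs] := all_cycles_hold aN le2 nc.
split; [|split].
- case: ifP => [_|/negbFE/eqP I0]; first by rewrite /has_cycle outer_cycle_uniq ?outer.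
  by move: outer; rewrite /outer_cycle -/I I0 /= andbT.
- move=> B Bb B2; case: (pair_block Bb B2) => q [r [-> q0 qr rm aqr]] J _.
  move: (pair_cycle_uniq q0 qr rm aqr) (pairs q r q0 qr rm aqr).
  by rewrite /pair_cycle /has_cycle /J /s [last _ _]/= => -> ->.
- move=> x _ sx; case: (moved_in_cycles aN le2 sx) => [inO|[q [r [q0 qr rm aqr inP]]]].
  + by left; split => //; exact: fcycle_moved outer inO sx.
  + right; exists [:: q; r]; first exact: pair_block_in.
    by split => //; exact: fcycle_moved (pairs q r q0 qr rm aqr) inP sx.
Qed.
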